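(* For all subsets $X_i, X_j \subseteq A$ the following hold: 1. $X_i \leadsto X_j$ if and only if for every $S' \subseteq S$: $\Psi_{X_i \cup X_j}(S') \subseteq \Psi_{X_i}(\Omega_{X_i \cup X_j}(S'))$; 2. $X_i \leadsto X_j$ if and only if for every $S' \subseteq S$: $\Psi_{X_i \cup X_j}(S') = \Psi_{X_i}(\Psi_{X_i \cup X_j}(S'))$.
   Context: Let $A$ be a finite set of agents. For each $a \in A$ let $S_a$ be a nonempty finite set, and let $S = \prod_{a \in A} S_a$ be the set of states. For each $a \in A$ let $\to_a \subseteq S \times S$ be a relation that is either empty or left-total (every state has at least one $\to_a$-successor), such that whenever $s \to_a s'$, either $s = s'$ or $s$ and $s'$ differ only in the $a$-component. For $X \subseteq A$ let $\to_X = \bigcup_{a \in X} \to_a$ (so $\to_\emptyset$ is empty) and let $\to_X^*$ be its reflexive-transitive closure. For $T \subseteq S$ write $(T \to_X) = \{ t' : \exists t \in T,\ t \to_X t'\}$. Orbit operator: $\Omega_X(S') = \{ s' : \exists s \in S',\ s \to_X^* s'\}$. Equilibria operator: $\Psi_X(S') = \{ s \in \Omega_X(S') : \forall s' \in S,\ s \to_X^* s' \implies s' \to_X^* s \}$. The modularity relation ($M$-relation) on subsets of $A$ is defined by: $X_i \leadsto X_j$ iff for every $S' \subseteq S$, letting $T = \Psi_{X_i}(\Psi_{X_i \cup X_j}(S'))$, one has $(T \to_{X_j}) \subseteq T$. *)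

From mathcomp Require Import all_boot.
Set Implicit Arguments. Unset Strict Implicit. Unset Printing Implicit Defensive.

Section Modularity.
Variables (A : finType) (Sa : A -> finType).

Definition state := {dffun forall a : A, Sa a}.

Variable step : A -> rel state.

Definition stepX (X : {set A}) : rel state :=
  fun s t => [exists a in X, step a s t].

Definition reachX (X : {set A}) : rel state := connect (stepX X).

Definition succ_set (T : {set state}) (X : {set A}) : {set state} :=
  [set t | [exists s in T, stepX X s t]].

Definition Omega (X : {set A}) (S' : {set state}) : {set state} :=
  [set t | [exists s in S', reachX X s t]].

Definition Psi (X : {set A}) (S' : {set state}) : {set state} :=
  [set s in Omega X S' | [forall t, reachX X s t ==> reachX X t s]].

Definition Mrel (Xi Xj : {set A}) : Prop :=
  forall S' : {set state},
    let T := Psi Xi (Psi (Xi :|: Xj) S') in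
    succ_set T Xj \subset T.

End Modularity.

From mathcomp Require Import all_boot.
Set Implicit Arguments. Unset Strict Implicit. Unset Printing Implicit Defensive.

(* All three conditions say the same thing: every (Xi :|: Xj)-equilibrium is
   an Xi-equilibrium.  For the M-relation, the set
   T = Psi_Xi (Psi_(Xi :|: Xj) [set s]) is closed under Xi-steps (equilibria are
   forward closed) and, by the M-relation, under Xj-steps; following Xi-steps
   from an (Xi :|: Xj)-equilibrium s into a terminal component (which exists by
   finiteness) lands in T, from where s is reachable again, so s lies in T. *)

Section Equilibrium.
Variables (T : finType) (e : rel T).

Definition equilibrium : pred T := [pred x | [forall y, connect e x y ==> connect e y x]].

Lemma equilibriumP x : reflect (forall y, connect e x y -> connect e y x) (equilibrium x).
Proof. by apply: (iffP forallP) => eq_x y; apply/implyP/eq_x. Qed.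

Lemma equilibrium_connect x y : equilibrium x -> connect e x y -> equilibrium y.
Proof.
move=> /equilibriumP eq_x xy; apply/equilibriumP => z yz.
exact: connect_trans (eq_x z (connect_trans xy yz)) xy.
Qed.

Lemma connect_forward_closed (P : pred T) :
  (forall x y, P x -> e x y -> P y) -> forall x y, P x -> connect e x y -> P y.
Proof.
move=> closedP x y Px /connectP[p + ->]; elim: p x Px => [|z p IHp] x Px //=.
by case/andP=> /(closedP _ _ Px) Pz; apply: IHp.
Qed.

(* A vertex reachable from x with the fewest reachable vertices is an equilibrium. *)
Lemma exists_connect_equilibrium x : exists2 y, connect e x y & equilibrium y.
Proof.
pose succs y := [set z | connect e y z].
case: (arg_minnP (fun y => #|succs y|) (connect0 e x)) => y xy min_y.
exists y => //; apply/equilibriumP => z yz.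
have sub_zy : succs z \subset succs y.
  by apply/subsetP => w; rewrite !inE; apply: connect_trans.
have /eqP eq_zy : succs z == succs y.
  by rewrite eqEcard sub_zy min_y // (connect_trans xy yz).
have : y \in succs z by rewrite eq_zy inE connect0.
by rewrite inE.
Qed.

End Equilibrium.

Section Operators.
Variables (A : finType) (Sa : A -> finType) (step : A -> rel (state Sa)).
Implicit Types (X Y : {set A}) (S P : {set state Sa}) (s t : state Sa).

Local Notation eqX X := (equilibrium (stepX step X)).

Lemma mem_Omega X S t : (t \in Omega step X S) = [exists s in S, reachX step X s t].
Proof. by rewrite inE. Qed.

Lemma mem_Psi X S s : (s \in Psi step X S) = (s \in Omega step X S) && eqX X s.
Proof. by rewrite inE. Qed.

Lemma stepX_subset X Y s t : X \subset Y -> stepX step X s t -> stepX step Y s t.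
Proof.
move=> sXY /existsP[a /andP[aX st]].
by apply/existsP; exists a; rewrite (subsetP sXY).
Qed.

Lemma reachX_subset X Y s t : X \subset Y -> reachX step X s t -> reachX step Y s t.
Proof. by move=> sXY; apply: connect_sub => u v /(stepX_subset sXY)/connect1. Qed.

Lemma Psi_reach_closed X S s t :
  s \in Psi step X S -> reachX step X s t -> t \in Psi step X S.
Proof.
rewrite !mem_Psi !mem_Omega => /andP[/existsP[u /andP[uS us]] eq_s] st.
rewrite (equilibrium_connect eq_s st) andbT.
by apply/existsP; exists u; rewrite uS; apply: connect_trans us st.
Qed.


Lemma mem_Psi_equilibrium X P s : s \in P -> eqX X s -> s \in Psi step X P.
Proof.
move=> sP eq_s; rewrite mem_Psi eq_s andbT mem_Omega.
by apply/existsP; exists s; rewrite sP; apply: connect0.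
Qed.

Lemma Psi_Psi_subset X Y S : X \subset Y -> Psi step X (Psi step Y S) \subset Psi step Y S.
Proof.
move=> sXY; apply/subsetP => s; rewrite mem_Psi mem_Omega.
by case/andP=> /existsP[u /andP[uP us]] _; apply: Psi_reach_closed uP (reachX_subset sXY us).
Qed.

Lemma Psi_subset_PsiP X Y :
  {subset eqX Y <= eqX X} <->
  (forall S, Psi step Y S \subset Psi step X (Omega step Y S)).
Proof.
split=> [sub_eq S | sub_Psi s eq_s].
  apply/subsetP => s; rewrite mem_Psi => /andP[sO /sub_eq].
  exact: mem_Psi_equilibrium.
have /(subsetP (sub_Psi [set s])) : s \in Psi step Y [set s].
  by apply: mem_Psi_equilibrium; rewrite ?set11.
by rewrite mem_Psi => /andP[].
Qed.

Lemma Psi_Psi_eqP X Y : X \subset Y ->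
  {subset eqX Y <= eqX X} <->
  (forall S, Psi step Y S = Psi step X (Psi step Y S)).
Proof.
move=> sXY; split=> [sub_eq S | eq_Psi s eq_s].
  apply/eqP; rewrite eqEsubset Psi_Psi_subset // andbT.
  apply/subsetP => s sP; apply: mem_Psi_equilibrium => //.
  by apply: sub_eq; move: sP; rewrite mem_Psi => /andP[].
have : s \in Psi step Y [set s] by apply: mem_Psi_equilibrium; rewrite ?set11.
by rewrite eq_Psi mem_Psi => /andP[].
Qed.

Lemma MrelP Xi Xj : Mrel step Xi Xj <-> {subset eqX (Xi :|: Xj) <= eqX Xi}.
Proof.
have sXiU : Xi \subset Xi :|: Xj := subsetUl Xi Xj.
split=> [M s eq_s | sub_eq S /=].
  set T := Psi step Xi (Psi step (Xi :|: Xj) [set s]).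
  have T_closed x y : x \in T -> stepX step (Xi :|: Xj) x y -> y \in T.
    move=> xT /existsP[a /andP[]]; rewrite inE => /orP[aXi | aXj] xy.
      by apply: Psi_reach_closed xT _; apply/connect1/existsP; exists a; rewrite aXi.
    apply: (subsetP (M [set s])); rewrite inE; apply/existsP; exists x.
    by rewrite xT; apply/existsP; exists a; rewrite aXj.
  have [t st eq_t] := exists_connect_equilibrium (stepX step Xi) s.
  have tT : t \in T.
    apply: mem_Psi_equilibrium eq_t; apply: Psi_reach_closed (reachX_subset sXiU st).
    by apply: mem_Psi_equilibrium; rewrite ?set11.
  have ts : reachX step (Xi :|: Xj) t s 
    by move/equilibriumP: eq_s; apply; apply: reachX_subset sXiU st.
  have := connect_forward_closed T_closed tT ts.
  by rewrite mem_Psi => /andP[].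
apply/subsetP => t; rewrite inE => /existsP[s /andP[sT st]].
have tP : t \in Psi step (Xi :|: Xj) S.
  apply: Psi_reach_closed (subsetP (Psi_Psi_subset S sXiU) s sT) _.
  exact/connect1/(stepX_subset (subsetUr Xi Xj)).
apply: mem_Psi_equilibrium (tP) (sub_eq _ _).
by move: tP; rewrite mem_Psi => /andP[].
Qed.

End Operators.

Theorem proposition2 (A : finType) (Sa : A -> finType)
  (Sa_nonempty : forall a : A, 0 < #|Sa a|)
  (step : A -> rel (state Sa))
  (step_empty_or_total : forall a : A,
     (forall s t, ~~ step a s t) \/ (forall s, exists t, step a s t))
  (step_local : forall (a : A) (s t : state Sa), step a s t ->
     s = t \/ (forall b : A, b != a -> s b = t b))
  (Xi Xj : {set A}) :
  (Mrel step Xi Xj <->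
     (forall S' : {set state Sa},
        Psi step (Xi :|: Xj) S' \subset Psi step Xi (Omega step (Xi :|: Xj) S')))
  /\
  (Mrel step Xi Xj <->
     (forall S' : {set state Sa},
        Psi step (Xi :|: Xj) S' = Psi step Xi (Psi step (Xi :|: Xj) S'))).
Proof.
split; apply: iff_trans (MrelP step Xi Xj) _.
- exact: Psi_subset_PsiP.
- exact/Psi_Psi_eqP/subsetUl.
Qed.
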